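(* Let $c>0,\Delta>0$ be universal constants such that for all $A\ge0$, $\sigma>0$, all $m_1,m_2$, all $x$ with $|m_1(x)-m_2(x)|/\sqrt{\sigma^2+A}\le\Delta$ and all $t$, one has $\frac12[L(t;m_1,A\mid x)+L(t;m_2,A\mid x)]\ge c\frac{\sigma^4}{(\sigma^2+A)^2}(m_1(x)-m_2(x))^2$. Then for all $m_1,m_2:\mathcal{X}\to\mathbb{R}$ and any $t:\mathcal{X}\times\mathbb{R}\to\mathbb{R}$, writing $$R:=c\,\frac{\sigma^4}{(\sigma^2+A)^2}\int\big(m_1(x)-m_2(x)\big)^2\,\mathbf{1}\Big\{\frac{(m_1(x)-m_2(x))^2}{\sigma^2+A}\le\Delta^2\Big\}\,d\mathbb{P}^X(x),$$ the implication $L(t;m_1,A)<R\ \Longrightarrow\ L(t;m_2,A)\ge R$ holds.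
   Context: Model: $X\sim\mathbb{P}^X$, $\mu\mid X\sim N(m(X),A)$, $Z\mid\mu\sim N(\mu,\sigma^2)$. Bayes rule $t^*_{m,A}(x,z)=\frac{A}{\sigma^2+A}z+\frac{\sigma^2}{\sigma^2+A}m(x)$. Pointwise excess risk $L(t;m,A\mid x)=\mathbb{E}_{m,A}[(t(x,Z)-\mu)^2-(t^*_{m,A}(x,Z)-\mu)^2\mid X=x]$, and $L(t;m,A)=\int L(t;m,A\mid x)\,d\mathbb{P}^X(x)$ (the excess risk of $t$ over the Bayes rule for a fresh draw $(X,\mu,Z)$). Such constants $c,\Delta$ exist (Lemma 2 of the paper). *)

From HB Require Import structures.
From mathcomp Require Import all_boot all_order all_algebra.
From mathcomp Require Import all_classical all_reals all_analysis.
Set Implicit Arguments. Unset Strict Implicit. Unset Printing Implicit Defensive.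
Import Order.TTheory GRing.Theory Num.Theory.
Local Open Scope classical_set_scope.
Local Open Scope ring_scope.

Section defs.
Context {R : realType} {d : measure_display} {T : measurableType d}.

Definition bayes_rule (s A : R) (m : T -> R) (x : T) (z : R) : R :=
  A / (s ^+ 2 + A) * z + s ^+ 2 / (s ^+ 2 + A) * m x.

(* Expectation of g(mu) for mu ~ N(a, A) (variance A >= 0); for A = 0
   the law is the Dirac mass at a, so the expectation is g a. *)
Definition prior_expect (a A : R) (g : R -> \bar R) : \bar R :=
  if A == 0 then g a
  else (\int[normal_prob a (Num.sqrt A)]_u g u)%E.

(* Pointwise excess risk L(t; m, A | x):
   E[(t(x,Z)-mu)^2 - (t*(x,Z)-mu)^2 | X = x] with mu | X=x ~ N(m x, A)
   and Z | mu ~ N(mu, s^2) (normal_prob takes the standard deviation s). *)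
Definition excess_risk_pt (s A : R) (t : T -> R -> R) (m : T -> R) (x : T)
  : \bar R :=
  prior_expect (m x) A (fun u =>
    (\int[normal_prob u s]_z
       ((t x z - u) ^+ 2 - (bayes_rule s A m x z - u) ^+ 2)%:E)%E).

Definition excess_risk (PX : probability T R) (s A : R) (t : T -> R -> R)
  (m : T -> R) : \bar R :=
  (\int[PX]_x excess_risk_pt s A t m x)%E.

End defs.

From HB Require Import structures.
From mathcomp Require Import all_boot all_order all_algebra.
From mathcomp Require Import all_classical all_reals all_analysis.
From mathcomp Require Import measurable_realfun.
From mathcomp Require Import lra.
Import Order.TTheory GRing.Theory Num.Theory.
Local Open Scope classical_set_scope.
Local Open Scope ring_scope.

(* Averaging the pointwise bound of Lemma 2 over x gives
   R <= (L(t; m1, A) + L(t; m2, A)) / 2: where the two means are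
   Delta-close this is Lemma 2 itself, and elsewhere the truncated integrand
   vanishes while both pointwise risks are nonnegative (Lemma 2 with
   m1 = m2).  Hence L(t; m1, A) < R forces L(t; m2, A) >= R.  The analytic
   work is the measurability of x |-> L(t; m, A | x), obtained from Tonelli
   once integrals against N(a, s^2) are written as Lebesgue integrals against
   the normal density. *)

Section integral_density.
Local Open Scope ereal_scope.
Context d (T : measurableType d) (R : realType).
Variables (mu nu : {measure set T -> \bar R}) (p : T -> R).
Hypotheses (p_ge0 : forall x, (0 <= p x)%R) (mp : measurable_fun setT p).
Hypothesis nuE : forall A, measurable A -> nu A = \int[mu]_(x in A) (p x)%:E.

Import HBNNSimple.

Let integral_density_indic A : measurable A ->
  \int[nu]_x (\1_A x)%:E = \int[mu]_x ((\1_A x)%:E * (p x)%:E).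
Proof.
move=> mA; rewrite integral_indic// setIT nuE// integral_mkcond.
by apply: eq_integral => x _; rewrite patchE indicE; case: (x \in A); rewrite ?mul1e ?mul0e.
Qed.

Lemma integral_density_nnsfun (h : {nnsfun T >-> R}) :
  \int[nu]_x (h x)%:E = \int[mu]_x ((h x)%:E * (p x)%:E).
Proof.
have mhr r : measurable_fun setT (fun x => (r * \1_(h @^-1` [set r]) x)%:E).
  by apply: measurableT_comp => //; apply: measurable_funM => //; exact: measurable_indic.
have p0 x : 0 <= (p x)%:E by rewrite lee_fin.
under eq_integral do rewrite fimfunE -fsumEFin//.
under [RHS]eq_integral => x _.
  rewrite fimfunE -fsumEFin// ge0_mule_fsuml => [|r]; last exact: nnfun_muleindic_ge0.
  over.
rewrite !ge0_integral_fsum//; last 3 first.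
- by move=> r; apply: emeasurable_funM => //; exact/measurable_EFinP.
- by move=> r x _; rewrite mule_ge0// EFinM nnfun_muleindic_ge0.
- by move=> r x _; rewrite EFinM nnfun_muleindic_ge0.
apply: eq_fsbigr => r /[!inE] -[x _ <-{r}].
under eq_integral do rewrite EFinM.
under [RHS]eq_integral do rewrite EFinM -muleA.
have mA : measurable (h @^-1` [set h x]) by exact: measurable_funPTI.
have m1A : measurable_fun setT (EFin \o (\1_(h @^-1` [set h x]) : T -> R)).
  by apply/measurable_EFinP; exact: measurable_indic.
rewrite !ge0_integralZl ?lee_fin//; last 2 first.
- by apply: emeasurable_funM => //; exact/measurable_EFinP.
- by move=> y _; rewrite mule_ge0// lee_fin.
by congr (_ * _); exact: integral_density_indic.
Qed.

Lemma ge0_integral_density (f : T -> \bar R) :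
  (forall x, 0 <= f x) -> measurable_fun setT f ->
  \int[nu]_x f x = \int[mu]_x (f x * (p x)%:E).
Proof.
move=> f0 mf; pose h := nnsfun_approx measurableT mf.
have h_cvg x : EFin \o h^~ x @ \oo --> f x by exact: cvg_nnsfun_approx.
have h_nd x : {homo h^~ x : m n / (m <= n)%N >-> (m <= n)%R}.
  by move=> m n mn; exact/lefP/nd_nnsfun_approx.
have mh n : measurable_fun setT (EFin \o h n).
  by apply/measurable_EFinP; exact: measurable_funPT.
transitivity (limn (fun n => \int[nu]_x (h n x)%:E)).
  rewrite -monotone_convergence//; last 2 first.
  - by move=> n x _; rewrite lee_fin.
  - by move=> x _ m n mn; rewrite lee_fin h_nd.
  by apply: eq_integral => x _; apply/esym/cvg_lim => //; exact: h_cvg.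
transitivity (limn (fun n => \int[mu]_x ((h n x)%:E * (p x)%:E))).
  by apply: congr_lim; apply/funext => n; exact: integral_density_nnsfun.
rewrite -monotone_convergence//; first last.
- by move=> x _ m n mn; rewrite lee_wpmul2r ?lee_fin ?h_nd.
- by move=> n x _; rewrite mule_ge0 ?lee_fin.
- by move=> n; apply: emeasurable_funM => //; exact/measurable_EFinP.
apply: eq_integral => x _; apply: cvg_lim => //.
by apply: cvgeZr => //; exact: h_cvg.
Qed.

End integral_density.

Section normal_parametric_integral.
Local Open Scope ereal_scope.
Context d (X : measurableType d) (R : realType).
Variables (mean : X -> R) (s : R).
Hypotheses (s_neq0 : s != 0%R) (mmean : measurable_fun setT mean).

Lemma measurable_normal_pdf_param :
  measurable_fun setT (fun p : X * R => normal_pdf (mean p.1) s p.2).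
Proof.
rewrite /normal_pdf (negbTE s_neq0) /normal_fun.
apply: measurable_funM => //; apply: measurableT_comp => //.
apply: measurable_funM => //; apply/measurable_funN/measurable_funX.
exact: measurable_funB (measurableT_comp mmean measurable_fst).
Qed.

Lemma ge0_measurable_normal_prob_integral (G : X * R -> \bar R) :
  (forall p, 0 <= G p) -> measurable_fun setT G ->
  measurable_fun setT (fun x => \int[normal_prob (mean x) s]_z G (x, z)).
Proof.
move=> G0 mG.
have -> : (fun x => \int[normal_prob (mean x) s]_z G (x, z)) =
    fubini_F lebesgue_measure (fun p => G p * (normal_pdf (mean p.1) s p.2)%:E).
  apply/funext => x; rewrite /fubini_F /=.
  apply: (@ge0_integral_density _ _ _ lebesgue_measure _ (normal_pdf (mean x) s)).
  - by move=> z; exact: normal_pdf_ge0.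
  - exact: measurable_normal_pdf.
  - by [].
  - by move=> z; exact: G0.
  - exact: measurable_fun_pair2.
apply: measurable_fun_fubini_tonelli_F.
- apply: emeasurable_funM => //; apply/measurable_EFinP.
  exact: measurable_normal_pdf_param.
- by move=> p; rewrite mule_ge0// lee_fin normal_pdf_ge0.
Qed.

Lemma measurable_normal_prob_integral (F : X * R -> \bar R) :
  measurable_fun setT F ->
  measurable_fun setT (fun x => \int[normal_prob (mean x) s]_z F (x, z)).
Proof.
move=> mF.
have -> : (fun x => \int[normal_prob (mean x) s]_z F (x, z)) =
    (fun x => \int[normal_prob (mean x) s]_z F^\+ (x, z) -
              \int[normal_prob (mean x) s]_z F^\- (x, z)).
  apply/funext => x; rewrite integralE.
  by congr (_ - _); apply: eq_integral => z _; rewrite ?funeposE ?funenegE.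
apply: emeasurable_funB.
- exact: ge0_measurable_normal_prob_integral (funepos_ge0 F) (measurable_funepos mF).
- exact: ge0_measurable_normal_prob_integral (funeneg_ge0 F) (measurable_funeneg mF).
Qed.

End normal_parametric_integral.
Arguments measurable_normal_prob_integral {d X R mean s} s_neq0 mmean {F}.

Lemma measurable_prior_expect d (X : measurableType d) (R : realType)
    (m : X -> R) (A : R) (g : X * R -> \bar R) :
  0 <= A -> measurable_fun setT m -> measurable_fun setT g ->
  measurable_fun setT (fun x => prior_expect (m x) A (fun u => g (x, u))).
Proof.
move=> A_ge0 mm mg; rewrite /prior_expect; have [_|A_neq0] := boolP (A == 0).
  exact: (measurableT_comp mg (measurable_fun_pair (@measurable_id _ X setT) mm)).
apply: measurable_normal_prob_integral => //.
by rewrite gt_eqF// sqrtr_gt0 lt_neqAle eq_sym A_neq0.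
Qed.
Arguments measurable_prior_expect {d X R m A g}.

Lemma measurable_excess_risk_pt d (T : measurableType d) (R : realType)
    (s A : R) (t : T -> R -> R) (m : T -> R) :
  s != 0 -> 0 <= A -> measurable_fun setT m ->
  measurable_fun setT (fun p : T * R => t p.1 p.2) ->
  measurable_fun setT (excess_risk_pt s A t m).
Proof.
move=> s_neq0 A_ge0 mm mt.
pose loss (q : (T * R) * R) :=
  ((t q.1.1 q.2 - q.1.2) ^+ 2 - (bayes_rule s A m q.1.1 q.2 - q.1.2) ^+ 2)%:E.
have mloss : measurable_fun setT loss.
  have m11 : measurable_fun setT (fun q : (T * R) * R => q.1.1).
    exact: measurableT_comp measurable_fst measurable_fst.
  have m12 : measurable_fun setT (fun q : (T * R) * R => q.1.2).
    exact: measurableT_comp measurable_snd measurable_fst.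
  apply/measurable_EFinP; rewrite /bayes_rule.
  apply: measurable_funB; apply: measurable_funX; apply: measurable_funB => //.
  - exact: measurableT_comp mt (measurable_fun_pair m11 measurable_snd).
  - apply: measurable_funD; apply: measurable_funM => //.
    exact: measurableT_comp mm m11.
exact: measurable_prior_expect A_ge0 mm
  (measurable_normal_prob_integral s_neq0 measurable_snd mloss).
Qed.

Section extended_real_means.
Local Open Scope ereal_scope.
Context (R : realFieldType).
Implicit Types a b r : \bar R.

Lemma halfe_double a : 2^-1%:E * (a + a) = a.
Proof.
case: a => [a| |] /=.
- by rewrite -EFinD -EFinM; congr EFin; lra.
- by rewrite [_ + _]/= mulry gtr0_sg ?invr_gt0// mul1e.
- by rewrite [_ + _]/= mulrNy gtr0_sg ?invr_gt0// mul1e.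
Qed.

Lemma halfe_add_ge_lt_le a b r : r <= 2^-1%:E * (a + b) -> a < r -> r <= b.
Proof.
have halfNy : 2^-1%:E * -oo = -oo :> \bar R.
  by rewrite mulrNy gtr0_sg ?invr_gt0// mul1e.
case: b => [b| |] hr ar; [|exact: leey|]; last first.
  by move: hr ar; rewrite addeNy halfNy leeNy_eq => /eqP ->; rewrite ltNge leNye.
case: a hr ar => [a| |] hr ar; last 2 first.
- by move: ar; rewrite ltNge leey.
- by move: hr ar; rewrite addNye halfNy leeNy_eq => /eqP ->.
case: r hr ar => [r| |] //; rewrite -EFinD -EFinM !lee_fin lte_fin; lra.
Qed.

End extended_real_means.

Lemma ge0_le_integral_half_add d (T : measurableType d) (R : realType)
    (mu : {measure set T -> \bar R}) (g f1 f2 : T -> \bar R) :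
  (forall x, 0 <= g x)%E -> (forall x, 0 <= f1 x)%E -> (forall x, 0 <= f2 x)%E ->
  measurable_fun setT g -> measurable_fun setT f1 -> measurable_fun setT f2 ->
  (forall x, g x <= 2^-1%:E * (f1 x + f2 x))%E ->
  (\int[mu]_x g x <= 2^-1%:E * (\int[mu]_x f1 x + \int[mu]_x f2 x))%E.
Proof.
move=> g0 f10 f20 mg mf1 mf2 gf.
rewrite -ge0_integralD// -ge0_integralZl ?lee_fin//; last 2 first.
- exact: emeasurable_funD.
- by move=> x _; rewrite adde_ge0.
apply: ge0_le_integral => //.
by apply: emeasurable_funM => //; exact: emeasurable_funD.
Qed.

Lemma normr_div_sqrt_le (R : rcfType) (x S D : R) :
  0 < S -> 0 <= D -> x ^+ 2 / S <= D ^+ 2 -> `|x| / Num.sqrt S <= D.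
Proof.
move=> S_gt0 D_ge0; rewrite -(@ler_sqr _ _ D) ?nnegrE ?divr_ge0 ?sqrtr_ge0//.
by rewrite expr_div_n real_normK ?num_real// sqr_sqrtr// ltW.
Qed.

Definition pointwise_risk_bound {R : realType} {d : measure_display}
    (T : measurableType d) (c Delta : R) : Prop :=
  forall (A s : R) (m1 m2 : T -> R) (x : T) (t : T -> R -> R),
    0 <= A -> 0 < s ->
    measurable_fun [set: R] (t x) ->
    `|m1 x - m2 x| / Num.sqrt (s ^+ 2 + A) <= Delta ->
    ((c * s ^+ 4 / (s ^+ 2 + A) ^+ 2 * (m1 x - m2 x) ^+ 2)%:E <=
     2^-1%:E * (excess_risk_pt s A t m1 x + excess_risk_pt s A t m2 x))%E.

Definition close_sqdiff {R : realType} {d : measure_display}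
    {T : measurableType d} (Delta s A : R) (m1 m2 : T -> R) (x : T) : R :=
  if (m1 x - m2 x) ^+ 2 / (s ^+ 2 + A) <= Delta ^+ 2
  then (m1 x - m2 x) ^+ 2 else 0.

Section averaging_lemma2.
Context {R : realType} {d : measure_display} {T : measurableType d}.
Context {c Delta A s : R} {t : T -> R -> R}.
Hypotheses (risk_bound : pointwise_risk_bound T c Delta) (Delta_gt0 : 0 < Delta).
Hypotheses (A_ge0 : 0 <= A) (s_gt0 : 0 < s).
Hypothesis mt : measurable_fun setT (fun p : T * R => t p.1 p.2).

Let mtx x : measurable_fun setT (t x).
Proof. exact: measurable_fun_pair2 x mt. Qed.

Lemma excess_risk_pt_ge0 (m : T -> R) x : (0 <= excess_risk_pt s A t m x)%E.
Proof.
have := risk_bound A s m m x t A_ge0 s_gt0 (mtx x).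
by rewrite subrr normr0 mul0r expr0n /= !mulr0 halfe_double; apply; exact: ltW.
Qed.

Lemma close_sqdiff_ge0 (m1 m2 : T -> R) x : 0 <= close_sqdiff Delta s A m1 m2 x.
Proof. by rewrite /close_sqdiff; case: ifP => // _; exact: sqr_ge0. Qed.

Lemma measurable_close_sqdiff (m1 m2 : T -> R) :
  measurable_fun setT m1 -> measurable_fun setT m2 ->
  measurable_fun setT (close_sqdiff Delta s A m1 m2).
Proof.
move=> mm1 mm2; have msq : measurable_fun setT (fun x => (m1 x - m2 x) ^+ 2).
  by apply: measurable_funX; exact: measurable_funB.
apply: measurable_fun_ifT => //.
by apply: measurable_fun_ler => //; exact: measurable_funM.
Qed.

Lemma close_sqdiff_risk_bound (m1 m2 : T -> R) x :
  ((c * s ^+ 4 / (s ^+ 2 + A) ^+ 2 * close_sqdiff Delta s A m1 m2 x)%:E <=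
   2^-1%:E * (excess_risk_pt s A t m1 x + excess_risk_pt s A t m2 x))%E.
Proof.
rewrite /close_sqdiff; case: ifPn => [close|_].
  apply: risk_bound => //; apply: normr_div_sqrt_le close; last exact: ltW.
  by rewrite ltr_wpDr// exprn_gt0.
by rewrite mulr0 mule_ge0 ?adde_ge0 ?lee_fin ?excess_risk_pt_ge0.
Qed.

End averaging_lemma2.

Theorem lemma3 (R : realType) (d : measure_display) (T : measurableType d)
  (PX : probability T R) (c Delta : R) :
  0 < c -> 0 < Delta ->
  (forall (A s : R) (m1 m2 : T -> R) (x : T) (t : T -> R -> R),
      0 <= A -> 0 < s ->
      measurable_fun [set: R] (t x) ->
      `|m1 x - m2 x| / Num.sqrt (s ^+ 2 + A) <= Delta ->
      ((c * s ^+ 4 / (s ^+ 2 + A) ^+ 2 * (m1 x - m2 x) ^+ 2)%:E <=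
       2^-1%:E * (excess_risk_pt s A t m1 x + excess_risk_pt s A t m2 x))%E) ->
  forall (A s : R), 0 <= A -> 0 < s ->
  forall (m1 m2 : T -> R) (t : T -> R -> R),
    measurable_fun [set: T] m1 -> measurable_fun [set: T] m2 ->
    measurable_fun [set: T * R] (fun p : T * R => t p.1 p.2) ->
    let Rbound : \bar R :=
      ((c * s ^+ 4 / (s ^+ 2 + A) ^+ 2)%:E *
       \int[PX]_x
         (if (m1 x - m2 x) ^+ 2 / (s ^+ 2 + A) <= Delta ^+ 2
          then (m1 x - m2 x) ^+ 2 else 0)%:E)%E in
    (excess_risk PX s A t m1 < Rbound)%E ->
    (Rbound <= excess_risk PX s A t m2)%E.
Proof.
move=> c_gt0 Delta_gt0 risk_bound A s A_ge0 s_gt0 m1 m2 t mm1 mm2 mt Rbound.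
pose k := c * s ^+ 4 / (s ^+ 2 + A) ^+ 2.
have -> : Rbound = (k%:E * \int[PX]_x (close_sqdiff Delta s A m1 m2 x)%:E)%E.
  by [].
move=> /halfe_add_ge_lt_le; apply.
have k_ge0 : 0 <= k by rewrite /k divr_ge0 ?sqr_ge0// mulr_ge0 ?exprn_ge0// ltW.
have mclose : measurable_fun setT (close_sqdiff Delta s A m1 m2).
  exact: measurable_close_sqdiff.
have risk_ge0 := excess_risk_pt_ge0 risk_bound Delta_gt0 A_ge0 s_gt0 mt.
have mrisk m : measurable_fun setT m -> measurable_fun setT (excess_risk_pt s A t m).
  by move=> mm; apply: measurable_excess_risk_pt => //; rewrite gt_eqF.
rewrite -ge0_integralZl ?lee_fin//; last 2 first.
- exact/measurable_EFinP.
- by move=> x _; rewrite lee_fin close_sqdiff_ge0.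
apply: ge0_le_integral_half_add.
- by move=> x; rewrite -EFinM lee_fin mulr_ge0 ?close_sqdiff_ge0.
- exact: risk_ge0.
- exact: risk_ge0.
- by apply: emeasurable_funM => //; exact/measurable_EFinP.
- exact: mrisk.
- exact: mrisk.
- by move=> x; rewrite -EFinM; exact: close_sqdiff_risk_bound.
Qed.
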